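(* Let $q$ be a prime power, let $n_1,n_2,m\ge1$ and $k_1,k_2$ be integers such that for $i=1,2$, $k_i^m\equiv 1\pmod{n_i}$ and $k_i^t\not\equiv 1\pmod{n_i}$ for $1\le t\le m-1$, and let $$G_2=(C_{n_1}\times C_{n_2})\rtimes C_m=\langle x,y,z\mid x^{n_1}=y^{n_2}=z^m=1,\ xy=yx,\ z^{-1}xz=x^{k_1},\ z^{-1}yz=y^{k_2}\rangle .$$ Order the $n_1n_2m$ elements of $G_2$ so that $z^iy^jx^k$ ($0\le k\le n_1-1$, $0\le j\le n_2-1$, $0\le i\le m-1$) is in position $1+k+n_1j+n_1n_2i$, and identify $\mathbb{F}_qG_2$ with $\mathbb{F}_q^{n_1n_2m}$ via $\Psi$ with respect to this ordering. Let $v\in\mathbb{F}_qG_2$ and let $C(v)$ be the code generated by the rows of $\sigma_{G_2}(v)$. Suppose $(b_1,\dots,b_{n_1n_2m})\in C(v)$. For $0\le i\le m-1$ and $0\le j\le n_2-1$ define $$\mathbf{b}_{j+1}'^{(i+1)}=(b_{in_1n_2+jn_1+1},b_{in_1n_2+jn_1+2},\dots,b_{in_1n_2+(j+1)n_1}),\qquad \mathbf{b}_{j+1}^{(i+1)}=T_{n_1}^{[k_1^i]_{n_1}}\big(\mathbf{b}_{j+1}'^{(i+1)}\big),$$ $$\widetilde{\mathbf{b}_{i+1}}=(\mathbf{b}_1^{(i+1)},\dots,\mathbf{b}_{n_2}^{(i+1)}),\qquad \widetilde{\mathbf{b}_{i+1}'}=T_{n_2}^{[k_2^i]_{n_2}}\big(\mathbf{b}_1'^{(i+1)},\dots,\mathbf{b}_{n_2}'^{(i+1)}\big),$$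 $$\widetilde{\mathbf{b}_{i+1}''}=(b_{1+n_1n_2i},b_{2+n_1n_2i},\dots,b_{n_1n_2(i+1)}),$$ where $T_{n_2}$ acts on the $n_2$-tuple of blocks. Then the concatenations $(\widetilde{\mathbf{b}_1},\dots,\widetilde{\mathbf{b}_m})$, $(\widetilde{\mathbf{b}_1'},\dots,\widetilde{\mathbf{b}_m'})$ and $T_m(\widetilde{\mathbf{b}_1''},\dots,\widetilde{\mathbf{b}_m''})$ are also codewords of $C(v)$.
   Context: For a finite group $G=\{g_1,\dots,g_N\}$ with a fixed ordering, $\mathbb{F}_qG$ is the group ring, and $\Psi:\mathbb{F}_qG\to\mathbb{F}_q^N$ sends $v=\sum_{i}\alpha_{g_i}g_i$ to $(\alpha_{g_1},\dots,\alpha_{g_N})$. The group ring matrix $\sigma_G(v)$ is the $N\times N$ matrix whose $(i,j)$ entry is $\alpha_{g_i^{-1}g_j}$; $C(v)$ denotes the row space of $\sigma_G(v)$. For a tuple $(c_1,\dots,c_r)$ (of scalars or of vectors), $T_r(c_1,\dots,c_r)=(c_r,c_1,\dots,c_{r-1})$ is the cyclic shift, and $T_r^s$ is its $s$-th iterate. For integers $a$ and $n\ge1$, $[a]_n$ denotes the smallest positive integer $a'$ with $a\equiv a'\pmod n$. *)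

From HB Require Import structures.
From mathcomp Require Import all_boot all_order all_fingroup all_algebra.
From mathcomp Require Import zify.
Set Implicit Arguments. Unset Strict Implicit. Unset Printing Implicit Defensive.
Import GRing.Theory Num.Theory.

Lemma idx3_lt (n1 n2 m : nat) (k : 'I_n1) (j : 'I_n2) (i : 'I_m) :
  (k + n1 * j + n1 * n2 * i < n1 * n2 * m)%N.
Proof.
case: k j i => k hk [j hj] [i hi] /=.
have h1 : (k + n1 * j < n1 * n2)%N by nia.
have h2 : (n1 * n2 * i.+1 <= n1 * n2 * m)%N by rewrite leq_mul2l hi orbT.
nia.
Qed.

(* the position (0-based) of z^i y^j x^k *)
Definition idx3 (n1 n2 m : nat) (k : 'I_n1) (j : 'I_n2) (i : 'I_m) : 'I_(n1 * n2 * m) :=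
  Ordinal (idx3_lt k j i).

Lemma kk_lt n1 n2 m (p : 'I_(n1 * n2 * m)) : (p %% n1 < n1)%N.
Proof. apply: ltn_pmod; case: p => p hp /=; nia. Qed.
Lemma jj_lt n1 n2 m (p : 'I_(n1 * n2 * m)) : ((p %/ n1) %% n2 < n2)%N.
Proof. apply: ltn_pmod; case: p => p hp /=; nia. Qed.
Lemma ii_lt n1 n2 m (p : 'I_(n1 * n2 * m)) : (p %/ (n1 * n2) < m)%N.
Proof. case: p => p hp /=. rewrite ltn_divLR; nia. Qed.

Definition kk n1 n2 m (p : 'I_(n1 * n2 * m)) : 'I_n1 := Ordinal (kk_lt p).
Definition jj n1 n2 m (p : 'I_(n1 * n2 * m)) : 'I_n2 := Ordinal (jj_lt p).
Definition ii n1 n2 m (p : 'I_(n1 * n2 * m)) : 'I_m := Ordinal (ii_lt p).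

Definition zexpg (gT : finGroupType) (x : gT) (k : int) : gT :=
  if (0 <= k)%R then (x ^+ `|k|%N)%g else ((x ^+ `|k|%N)^-1)%g.

(* [a]_n : smallest positive integer a' with a = a' (mod n), for n >= 1 *)
Definition posrep (a : int) (n : nat) : nat :=
  let r := `|(a %% n)%Z|%N in if r == 0%N then n else r.

(* ---- cyclic shift T_r(c_1,...,c_r) = (c_r, c_1, ..., c_{r-1}),
        tuples of length r represented as functions 'I_r -> R ---- *)
Definition cshift (R : Type) (r : nat) (c : 'I_r -> R) : 'I_r -> R :=
  fun t => c (ord_pred t).

Definition cshiftn (R : Type) (r s : nat) (c : 'I_r -> R) : 'I_r -> R :=
  iter s (@cshift R r) c.

Definition G2elt (gT : finGroupType) (n1 n2 m : nat) (x y z : gT)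
  (p : 'I_(n1 * n2 * m)) : gT :=
  (z ^+ ii p * y ^+ jj p * x ^+ kk p)%g.

(* ---- group ring matrix sigma_G(v), (a,b) entry alpha_{g_a^{-1} g_b} ---- *)
Definition grmx (F : fieldType) (gT : finGroupType) (N : nat) (g : 'I_N -> gT)
  (v : gT -> F) : 'M[F]_N :=
  \matrix_(a < N, b < N) v ((g a)^-1 * g b)%g.

Definition in_code (F : fieldType) (N : nat) (c : 'rV[F]_N) (M : 'M[F]_N) : bool :=
  (c <= M)%MS.

Definition blk (F : Type) n1 n2 m (b : 'rV[F]_(n1 * n2 * m)) (i : 'I_m) (j : 'I_n2)
  : 'I_n1 -> F := fun k => b ord0 (idx3 k j i).

Definition concat3 (F : Type) n1 n2 m (f : 'I_m -> 'I_n2 -> 'I_n1 -> F)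
  : 'rV[F]_(n1 * n2 * m) := \row_p f (ii p) (jj p) (kk p).

From HB Require Import structures.
From mathcomp Require Import all_boot all_order all_fingroup all_algebra all_field zify.
Import GRing.Theory Num.Theory.

(* The row space of sigma_G(v) is a left ideal of F G: translating a codeword
   by any h in G permutes its coordinates according to g |-> h g and gives a
   codeword again.  In the normal form z^i y^j x^k of G_2 one has
   x z^i y^j x^k = z^i y^j x^(k1^i + k),  y z^i y^j x^k = z^i y^(k2^i + j) x^k
   and  z z^i y^j x^k = z^(i+1) y^j x^k,  and the three words of the theorem are
   exactly the translates of b by x, y and z. *)

Lemma zexpg_mod {gT : finGroupType} {w : gT} {n : nat} :
  (0 < n)%N -> (w ^+ n = 1)%g -> forall k, zexpg w k = (w ^+ `|(k %% n)%Z|%N)%g.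
Proof.
move=> n_gt0 wn1 k; rewrite /zexpg; case: k => a /=.
  by rewrite modz_nat /= expg_mod.
have n_dvd : (n %| `|(Negz a %% n)%Z|%N + a.+1)%N.
  have := divz_eq (Negz a) n; have := @modz_ge0 (Negz a) n.
  move: (Negz a %% n)%Z (Negz a %/ n)%Z => r q r_ge0 def_a.
  apply/dvdnP; exists `|q|%N; lia.
apply: mulg1_eq; rewrite -expgD -(expg_mod _ wn1) addnC.
by move/eqP: n_dvd => ->; rewrite expg0.
Qed.

Lemma absz_modzX (k : int) (n i : nat) : (0 < n)%N ->
  `|(k ^+ i %% n)%Z|%N = (`|(k %% n)%Z|%N ^ i %% n)%N.
Proof.
move=> n_gt0; have k_ge0 : (0 <= (k %% n)%Z)%R by apply: modz_ge0; lia.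
apply/eqP; rewrite -eqz_nat -modz_nat -[Posz (_ ^ _)]natz natrX natz.
by rewrite (gez0_abs k_ge0) modzXm gez0_abs //; apply: modz_ge0; lia.
Qed.

Lemma posrep_mod (a : int) (n : nat) : (0 < n)%N ->
  (posrep a n = `|(a %% n)%Z|%N %[mod n])%N.
Proof.
move=> n_gt0; rewrite /posrep; case: eqP => [->|_] //.
by rewrite modnn mod0n.
Qed.

Lemma cshiftnE {R : Type} {r : nat} (r_gt0 : (0 < r)%N) (s : nat) (c : 'I_r -> R) (t : 'I_r) :
  cshiftn s c t = c (Ordinal (ltn_pmod (t + s * (r - 1)) r_gt0)).
Proof.
elim: s t => [|s IH] t.
  by congr c; apply: val_inj; rewrite /= mul0n addn0 modn_small.
rewrite /cshiftn iterS -/(cshiftn s c) /cshift IH; congr c; apply: val_inj => /=.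
by rewrite modnDml; congr modn; have := ltn_ord t; rewrite mulSn; lia.
Qed.

(* [k + s * (n - 1)] is [k - s] modulo [n], the index read by [cshiftnE]. *)
Lemma modn_add_rotK {n s a k : nat} : (0 < n)%N -> (s = a %[mod n])%N ->
  ((a + (k + s * (n - 1))) %% n = k %% n)%N.
Proof.
move=> n_gt0 sa; rewrite -modnDml -sa modnDml.
have -> : (s + (k + s * (n - 1)) = k + s * n)%N.
  have : (s <= s * n)%N by rewrite leq_pmulr.
  by rewrite mulnBr muln1; lia.
by rewrite addnC modnMDl.
Qed.

Section Enumeration.

Variables n1 n2 m : nat.
Variables (k : 'I_n1) (j : 'I_n2) (i : 'I_m).

Lemma ii_idx3 : ii (idx3 k j i) = i.
Proof.
apply: val_inj => /=; have := ltn_ord k; have := ltn_ord j => hj hk.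
have n12_gt0 : (0 < n1 * n2)%N by nia.
have -> : (k + n1 * j + n1 * n2 * i = i * (n1 * n2) + (k + n1 * j))%N by lia.
by rewrite divnMDl // divn_small ?addn0 //; nia.
Qed.

Lemma kk_idx3 : kk (idx3 k j i) = k.
Proof.
apply: val_inj => /=.
have -> : (k + n1 * j + n1 * n2 * i = (j + n2 * i) * n1 + k)%N by lia.
by rewrite modnMDl modn_small.
Qed.

Lemma jj_idx3 : jj (idx3 k j i) = j.
Proof.
apply: val_inj => /=; have := ltn_ord k; have := ltn_ord j => hj hk.
have -> : (k + n1 * j + n1 * n2 * i = (j + n2 * i) * n1 + k)%N by lia.
rewrite divnMDl ?divn_small ?addn0 //; last by lia.
by rewrite addnC mulnC modnMDl modn_small.
Qed.

Lemma G2elt_idx3 (gT : finGroupType) (x y z : gT) :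
  G2elt x y z (idx3 k j i) = (z ^+ i * y ^+ j * x ^+ k)%g.
Proof. by rewrite /G2elt ii_idx3 jj_idx3 kk_idx3. Qed.

End Enumeration.

(* Row [tr a] of [grmx g v] is row [a] with its coordinates permuted by [pi]. *)
Lemma in_code_translate (F : fieldType) (gT : finGroupType) (N : nat)
    (g : 'I_N -> gT) (v : gT -> F) (h : gT) (pi tr : 'I_N -> 'I_N) (b : 'rV[F]_N) :
    (forall p, h * g (pi p) = g p)%g -> (forall a, g (tr a) = h * g a)%g ->
  in_code b (grmx g v) -> in_code (\row_p b ord0 (pi p))%R (grmx g v).
Proof.
rewrite /in_code => pi_h tr_h /submxP [u ->].
have -> : (\row_p (u *m grmx g v) ord0 (pi p))%R =
          (\sum_a u ord0 a *: row (tr a) (grmx g v))%R.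
  apply/rowP => p; rewrite !mxE summxE; apply: eq_bigr => a _.
  by rewrite !mxE tr_h -(pi_h p) invMg -!mulgA (mulgA h^-1%g) mulVg mul1g.
by apply: summx_sub => a _; apply: scalemx_sub; apply: row_sub.
Qed.

Lemma mulg_expg_conj {gT : finGroupType} {w z : gT} {K : nat} :
  (w ^ z = w ^+ K)%g -> forall i, (w * z ^+ i = z ^+ i * w ^+ (K ^ i))%g.
Proof.
move=> wz i; rewrite conjgC; congr (_ * _)%g.
elim: i => [|i IH]; first by rewrite expg0 conjg1 expn0 expg1.
by rewrite expgSr conjgM IH conjXg wz expnS -expgM mulnC.
Qed.

Section Translations.

Context {F : fieldType} {gT : finGroupType} {n1 n2 m K1 K2 : nat} {x y z : gT}.
Hypotheses (n1_gt0 : (0 < n1)%N) (n2_gt0 : (0 < n2)%N).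
Hypotheses (xn1 : (x ^+ n1 = 1)%g) (yn2 : (y ^+ n2 = 1)%g) (zm : (z ^+ m = 1)%g).
Hypotheses (cxy : commute x y) (xz : (x ^ z = x ^+ K1)%g) (yz : (y ^ z = y ^+ K2)%g).
Context {v : gT -> F}.

Local Notation g := (G2elt x y z (n1:=n1) (n2:=n2) (m:=m)).
Local Notation S := (grmx g v).

Lemma mulx_normal (i j c : nat) :
  (x * (z ^+ i * y ^+ j * x ^+ c) = z ^+ i * y ^+ j * x ^+ (K1 ^ i + c))%g.
Proof.
rewrite !mulgA (mulg_expg_conj xz) -(mulgA _ (x ^+ _)%g) (commuteX2 _ _ cxy).
by rewrite !mulgA -[(_ * x ^+ _ * x ^+ _)%g]mulgA -expgD.
Qed.

Lemma muly_normal (i j c : nat) :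
  (y * (z ^+ i * y ^+ j * x ^+ c) = z ^+ i * y ^+ (K2 ^ i + j) * x ^+ c)%g.
Proof. by rewrite !mulgA (mulg_expg_conj yz) -[(_ * y ^+ _ * y ^+ _)%g]mulgA -expgD. Qed.

Lemma in_code_translate_x (s : 'I_m -> nat) (b : 'rV[F]_(n1 * n2 * m)) :
    (forall i, s i = K1 ^ i %[mod n1])%N -> in_code b S ->
  in_code (concat3 (fun i j => cshiftn (s i) (blk b i j))) S.
Proof.
move=> sK1; set pi := fun p : 'I_(n1 * n2 * m) =>
  idx3 (Ordinal (ltn_pmod (kk p + s (ii p) * (n1 - 1)) n1_gt0)) (jj p) (ii p).
have -> : concat3 (fun i j => cshiftn (s i) (blk b i j)) = (\row_p b ord0 (pi p))%R.
  by apply/rowP => p; rewrite !mxE (cshiftnE n1_gt0).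
apply: (@in_code_translate _ _ _ _ _ x _
  (fun a => idx3 (Ordinal (ltn_pmod (K1 ^ ii a + kk a) n1_gt0)) (jj a) (ii a))).
- move=> p; rewrite G2elt_idx3 mulx_normal /= -[in LHS](expg_mod _ xn1) modnDmr.
  by rewrite (modn_add_rotK n1_gt0 (sK1 _)) modn_mod.
- by move=> a; rewrite G2elt_idx3 mulx_normal /= (expg_mod _ xn1).
Qed.

Lemma in_code_translate_y (s : 'I_m -> nat) (b : 'rV[F]_(n1 * n2 * m)) :
    (forall i, s i = K2 ^ i %[mod n2])%N -> in_code b S ->
  in_code (concat3 (fun i => cshiftn (s i) (blk b i))) S.
Proof.
move=> sK2; set pi := fun p : 'I_(n1 * n2 * m) =>
  idx3 (kk p) (Ordinal (ltn_pmod (jj p + s (ii p) * (n2 - 1)) n2_gt0)) (ii p).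
have -> : concat3 (fun i => cshiftn (s i) (blk b i)) = (\row_p b ord0 (pi p))%R.
  by apply/rowP => p; rewrite !mxE (cshiftnE n2_gt0).
apply: (@in_code_translate _ _ _ _ _ y _
  (fun a => idx3 (kk a) (Ordinal (ltn_pmod (K2 ^ ii a + jj a) n2_gt0)) (ii a))).
- move=> p; rewrite G2elt_idx3 muly_normal /= -(expg_mod _ yn2) modnDmr.
  by rewrite (modn_add_rotK n2_gt0 (sK2 _)) (expg_mod _ yn2).
- by move=> a; rewrite G2elt_idx3 muly_normal /= (expg_mod _ yn2).
Qed.

Lemma in_code_translate_z (b : 'rV[F]_(n1 * n2 * m)) :
  in_code b S -> in_code (concat3 (cshift (blk b))) S.
Proof.
set pi := fun p : 'I_(n1 * n2 * m) => idx3 (kk p) (jj p) (ord_pred (ii p)).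
have -> : concat3 (cshift (blk b)) = (\row_p b ord0 (pi p))%R.
  by apply/rowP => p; rewrite !mxE.
apply: (@in_code_translate _ _ _ _ _ z _ (fun a => idx3 (kk a) (jj a) (ordS (ii a)))).
- move=> p; rewrite G2elt_idx3 !mulgA -expgS -(expg_mod _ zm).
  by rewrite -[_ %% m]/(val (ordS (ord_pred (ii p)))) ord_predK.
- by move=> a; rewrite G2elt_idx3 /= (expg_mod _ zm) !mulgA -expgS.
Qed.

End Translations.

Theorem theorem3p2
  (F : finFieldType) (gT : finGroupType)
  (n1 n2 m : nat) (k1 k2 : int) (x y z : gT)
  (hn1 : (1 <= n1)%N) (hn2 : (1 <= n2)%N) (hm : (1 <= m)%N)
  (hk1 : (k1 ^+ m == 1 %[mod n1])%Z)
  (hk2 : (k2 ^+ m == 1 %[mod n2])%Z)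
  (hk1t : forall t : nat, (1 <= t <= m - 1)%N -> ~~ (k1 ^+ t == 1 %[mod n1])%Z)
  (hk2t : forall t : nat, (1 <= t <= m - 1)%N -> ~~ (k2 ^+ t == 1 %[mod n2])%Z)
  (* G_2 = <x, y, z | x^n1 = y^n2 = z^m = 1, xy = yx, z^-1 x z = x^k1, z^-1 y z = y^k2 > *)
  (hx : (x ^+ n1 = 1)%g) (hy : (y ^+ n2 = 1)%g) (hz : (z ^+ m = 1)%g)
  (hxy : (x * y = y * x)%g)
  (hzx : (x ^ z = zexpg x k1)%g) (hzy : (y ^ z = zexpg y k2)%g)
  (* the n1 n2 m elements z^i y^j x^k are pairwise distinct (so they form G_2),
     z^i y^j x^k being in position 1 + k + n1 j + n1 n2 i *)
  (hinj : injective (@G2elt gT n1 n2 m x y z))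
  (v : gT -> F) (b : 'rV[F]_(n1 * n2 * m)) :
  let S := grmx (@G2elt gT n1 n2 m x y z) v in
  in_code b S ->
  [/\ in_code (concat3 (fun (i : 'I_m) (j : 'I_n2) =>
                  cshiftn (posrep (k1 ^+ i) n1) (blk b i j))) S,
      in_code (concat3 (fun i : 'I_m =>
                  cshiftn (posrep (k2 ^+ i) n2) (blk b i))) S
    & in_code (concat3 (cshift (blk b))) S].
Proof.
move=> S bS.
rewrite (zexpg_mod hn1 hx) in hzx; rewrite (zexpg_mod hn2 hy) in hzy.
have posrepX n k i : (0 < n)%N ->
    (posrep (k ^+ i) n = `|(k %% n)%Z|%N ^ i %[mod n])%N.
  by move=> n_gt0; rewrite posrep_mod // absz_modzX // modn_mod.
split.
- by apply: (in_code_translate_x hn1 hx hxy hzx) => // i; apply: posrepX.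
- by apply: (in_code_translate_y hn2 hy hzy) => // i; apply: posrepX.
- exact: (in_code_translate_z hz b bS).
Qed.
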